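(* With notation as in the context, the left braces $B_{j_0,\dots,j_{n-1}}$ and $\mathcal G(X,r_{j_0,\dots,j_{n-1}})$ (with its natural left brace structure) are isomorphic if and only if the bilinear form $b_{j_0,\dots,j_{n-1}}$ is non-singular, i.e. the only $u\in(\mathbb Z/(n))^n$ with $b_{j_0,\dots,j_{n-1}}(u,v)=0$ for all $v$ is $u=0$.
   Context: Let $n>1$ and let $e_i$ ($i\in\mathbb Z/(n)$) be the standard basis of the free $\mathbb Z/(n)$-module $(\mathbb Z/(n))^n$, indices in $\mathbb Z/(n)$. Let $\alpha(i)(e_k)=e_{i+k}$. Given $j_0,\dots,j_{n-1}\in\mathbb Z/(n)$ with $j_i=j_{-i}$, let $b=b_{j_0,\dots,j_{n-1}}$ be the bilinear form with $b(e_k,e_l)=j_{l-k}$. $B_{j_0,\dots,j_{n-1}}$ is the set $(\mathbb Z/(n))^n\times\mathbb Z/(n)$ with $(u,i)\circ(v,j)=(u+\alpha(i)(v),i+j)$ and $(u,i)+(v,j)=(u+v,i+j+b(u,v))$, a left brace with lambda map $\lambda_{(u,i)}(v,j)=(\alpha(i)(v),\ j-b(u,\alpha(i)(v)))$. Let $x_{ij}=(e_i,j)$, $X=\{x_{ij}\}$, and $r_{j_0,\dots,j_{n-1}}(x,y)=(\lambda_x(y),\lambda^{-1}_{\lambda_x(y)}(x))$ on $X\times X$; it is a solution of the YBE with $\sigma_x=\lambda_x|_X$. A left brace is a set with an abelian group $+$ and a group $\circ$ satisfying $a\circ(b+c)+a=a\circ b+a\circ c$; isomorphisms of left braces are bijections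 preserving both operations. For a solution $(X,r)$, $r(x,y)=(\sigma_x(y),\gamma_y(x))$, $\mathcal G(X,r)=\langle\sigma_x\rangle\le\mathrm{Sym}_X$; the structure group $G(X,r)$ (generators $X$, relations $xy=\sigma_x(y)\gamma_y(x)$) carries a left brace structure with additive group free abelian on $X$ and $\lambda_x(y)=\sigma_x(y)$; $x\mapsto\sigma_x$ extends to a surjective homomorphism $\phi:G(X,r)\to\mathcal G(X,r)$ with kernel the socle $\{g: \lambda_g=\mathrm{id}\}$ of $G(X,r)$, and the natural left brace structure on $\mathcal G(X,r)$ is the unique one making $\phi$ a brace homomorphism. *)

From HB Require Import structures.
From mathcomp Require Import all_boot all_order all_fingroup all_algebra.
Set Implicit Arguments. Unset Strict Implicit. Unset Printing Implicit Defensive.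
Import GRing.Theory.
Local Open Scope ring_scope.

Section Defs.
Variable n : nat.

Definition vec := {ffun 'Z_n -> 'Z_n}.
Definition vadd (u v : vec) : vec := [ffun k => u k + v k].
Definition vzero : vec := [ffun => 0].
Definition ev (i : 'Z_n) : vec := [ffun k => (k == i)%:R].
(* alpha(i)(e_k) = e_{i+k}, extended linearly *)
Definition alpha (i : 'Z_n) (v : vec) : vec := [ffun k => v (k - i)].
Definition bform (J : 'Z_n -> 'Z_n) (u v : vec) : 'Z_n :=
  \sum_(k : 'Z_n) \sum_(l : 'Z_n) u k * v l * J (l - k).

Definition Bt := (vec * 'Z_n)%type.
Definition Bcirc (a b : Bt) : Bt := (vadd a.1 (alpha a.2 b.1), a.2 + b.2).
Definition Badd (J : 'Z_n -> 'Z_n) (a b : Bt) : Bt :=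
  (vadd a.1 b.1, a.2 + b.2 + bform J a.1 b.1).
Definition Blam (J : 'Z_n -> 'Z_n) (a b : Bt) : Bt :=
  (alpha a.2 b.1, b.2 - bform J a.1 (alpha a.2 b.1)).

(* X is indexed by pairs (i,j), x_ij = (e_i, j) *)
Definition Xt := ('Z_n * 'Z_n)%type.
Definition emb (x : Xt) : Bt := (ev x.1, x.2).

(* sigma_{x_ij}(x_kl) = x_{j+k, l - J(j+k-i)}, i.e. lambda restricted to X
   (see lemma sigma_funE below) *)
Definition sigma_fun (J : 'Z_n -> 'Z_n) (x y : Xt) : Xt :=
  (x.2 + y.1, y.2 - J (x.2 + y.1 - x.1)).

Lemma sigma_fun_inj J x : injective (sigma_fun J x).
Proof.
move=> [k l] [k' l'] E.
have Ek : k = k' by apply: (addrI x.2); exact: (congr1 fst E).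
subst k'; have El := congr1 snd E; rewrite /= in El.
by rewrite (addIr _ El).
Qed.

Definition sigma (J : 'Z_n -> 'Z_n) (x : Xt) : {perm Xt} :=
  perm (@sigma_fun_inj J x).

Definition calG (J : 'Z_n -> 'Z_n) : {set {perm Xt}} :=
  (<<[set sigma J x | x : Xt]>>)%g.

End Defs.

Lemma sigma_funE (n : nat) (J : 'Z_n -> 'Z_n) (x y : Xt n) :
  emb (sigma_fun J x y) = Blam J (emb x) (emb y).
Proof.
case: x y => [i j] [k l]; rewrite /emb /Blam /sigma_fun /=.
have Ea : alpha j (ev k) = ev (j + k).
  by apply/ffunP => m; rewrite !ffunE subr_eq [k + j]addrC.
rewrite Ea; congr (_, _ - _).
rewrite /bform (bigD1 i) //= [X in _ = _ + X]big1 => [|a Ha]; last first.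
  by apply: big1 => c _; rewrite !ffunE (negPf Ha) !mul0r.
rewrite addr0 (bigD1 (j + k)) //= [X in _ = _ + X]big1 => [|c Hc]; last first.
  by rewrite !ffunE (negPf Hc) mulr0 mul0r.
by rewrite !ffunE !eqxx addr0 !mul1r.
Qed.

Definition is_group_op (T : Type) (op : T -> T -> T) : Prop :=
  associative op /\
  exists e : T, left_id e op /\ right_id e op /\
     forall a, exists a', op a a' = e /\ op a' a = e.

Definition is_left_brace (G : zmodType) (circ : G -> G -> G) : Prop :=
  is_group_op circ /\
  forall a b c : G, (circ a (b + c) + a = circ a b + circ a c)%R.

Definition brace_lam (G : zmodType) (circ : G -> G -> G) (a b : G) : G :=
  (- a + circ a b)%R.

(* [natural_add J add]: [add] is the addition of the natural left brace
   structure on calG J, i.e. the map phi : G(X,r) -> calG J with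
   phi(x) = sigma_x is a homomorphism of left braces, where G(X,r) is the
   structure group with its left brace structure: additive group free
   abelian on X (iota) and lambda_x(y) = sigma_x(y).  The multiplication
   on calG J is composition: (g o h)(z) = g (h z), which in MathComp's
   convention for {perm _} is written h * g. *)
Definition natural_add (n : nat) (J : 'Z_n -> 'Z_n)
  (add : {perm Xt n} -> {perm Xt n} -> {perm Xt n}) : Prop :=
  exists (G : zmodType) (circ : G -> G -> G) (iota : Xt n -> G)
         (phi : G -> {perm Xt n}),
    is_left_brace circ /\
    bijective (fun c : {ffun Xt n -> int} => (\sum_x (iota x) *~ c x)%R) /\
    (forall x y, brace_lam circ (iota x) (iota y) = iota (sigma J x y)) /\
    (forall x, phi (iota x) = sigma J x) /\
    (forall a b, phi (circ a b) = (phi b * phi a)%g) /\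
    (forall a b, phi (a + b)%R = add (phi a) (phi b)).

Definition brace_iso_B_calG (n : nat) (J : 'Z_n -> 'Z_n)
  (add : {perm Xt n} -> {perm Xt n} -> {perm Xt n}) : Prop :=
  exists f : Bt n -> {perm Xt n},
    [/\ forall a, f a \in calG J,
        injective f,
        forall g, g \in calG J -> exists a, f a = g,
        forall a b, f (Badd J a b) = add (f a) (f b)
      & forall a b, f (Bcirc a b) = (f b * f a)%g].

Definition nonsingular (n : nat) (J : 'Z_n -> 'Z_n) : Prop :=
  forall u : vec n, (forall v : vec n, bform J u v = 0) -> u = vzero n.

From HB Require Import structures.
From mathcomp Require Import all_boot all_order all_fingroup all_algebra.
From mathcomp Require Import ring.
Set Implicit Arguments. Unset Strict Implicit. Unset Printing Implicit Defensive.
Import GRing.Theory.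
Local Open Scope ring_scope.

(* The bridge between the two braces is lamX J : B_J -> Sym(X), the lambda
   map of B_J restricted to X = {(e_i, j)}.  It is a homomorphism of (B, circ)
   onto calG J whose kernel is {(u, 0) | u in the radical of b_J}.
   - If B_J and calG J are isomorphic they have the same size, so lamX J is
     injective and the radical of b_J is trivial.
   - If b_J is non-singular, lamX J is a bijection onto calG J preserving
     circ.  For addition we use the structure group G: by induction over its
     free generators, phi(g) computes lambda_g on the generators, so adding
     a generator iota(y) to g multiplies phi(g) exactly as adding emb(y) to
     a multiplies lamX J a.  Hence lamX^-1 o phi is additive, and since phi
     is additive onto (calG J, add), so is lamX J. *)

Section LeftBrace.
Variables (G : zmodType) (circ : G -> G -> G).
Hypothesis braceG : is_left_brace circ.
Local Notation lam := (brace_lam circ).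

Lemma brace_circA : associative circ.
Proof. by case: braceG => [[]]. Qed.

Lemma brace_circ0 a : circ a 0 = a.
Proof. by have := braceG.2 a 0 0; rewrite addr0 => /addrI. Qed.

Lemma brace_left_id0 e : left_id e circ -> e = 0.
Proof. by move=> e_left; rewrite -(brace_circ0 e) e_left. Qed.

Lemma brace_0circ a : circ 0 a = a.
Proof.
case: braceG => [[_ [e [e_left _]]] _].
by rewrite -(brace_left_id0 e_left) e_left.
Qed.

Lemma brace_circ_inv a : exists a', circ a a' = 0 /\ circ a' a = 0.
Proof.
case: braceG => [[_ [e [e_left [_ e_inv]]]] _].
by rewrite -(brace_left_id0 e_left).
Qed.

Lemma circ_lam a c : circ a c = a + lam a c.
Proof. by rewrite /brace_lam addrA subrr add0r. Qed.

Lemma lamD a b c : lam a (b + c) = lam a b + lam a c.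
Proof.
rewrite /brace_lam.
have -> : circ a (b + c) = circ a b + circ a c - a by rewrite -(braceG.2 a b c) addrK.
by rewrite !addrA [RHS]addrAC.
Qed.

Lemma lam_a0 a : lam a 0 = 0.
Proof. by rewrite /brace_lam brace_circ0 addNr. Qed.

Lemma lamN a b : lam a (- b) = - lam a b.
Proof. by apply: (addrI (lam a b)); rewrite -lamD !subrr lam_a0. Qed.

Lemma lam0 c : lam 0 c = c.
Proof. by rewrite /brace_lam brace_0circ oppr0 add0r. Qed.

Lemma lamM a b c : lam (circ a b) c = lam a (lam b c).
Proof.
rewrite [lam b c]/brace_lam lamD lamN /brace_lam brace_circA opprD opprK.
by rewrite [RHS]addrA [a - _ - _]addrAC subrr add0r.
Qed.

Lemma lam_inj a : injective (lam a).
Proof.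
move=> b c; rewrite /brace_lam => /addrI E.
have [a' [_ Ha']] := brace_circ_inv a.
by rewrite -(brace_0circ b) -(brace_0circ c) -Ha' -!brace_circA E.
Qed.

End LeftBrace.

Lemma generated_ind (T : finType) (G : zmodType) (iota : T -> G) (P : G -> Prop) :
  (forall g, exists c : {ffun T -> int}, g = \sum_x iota x *~ c x) ->
  P 0 -> (forall h y, P h -> P (h + iota y)) -> (forall h y, P h -> P (h - iota y)) ->
  forall g, P g.
Proof.
move=> gen P0 Pp Pm g; have [c ->] := gen g.
have Pn h y m : P h -> P (h + iota y *+ m) /\ P (h - iota y *+ m).
  move=> Ph; elim: m => [|m [IHp IHm]]; first by rewrite mulr0n addr0 subr0.
  by rewrite mulrSr opprD !addrA; split; [apply: Pp | apply: Pm].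
have Pz h y (k : int) : P h -> P (h + iota y *~ k).
  case: k => m Ph; first by rewrite -pmulrn; case: (Pn h y m Ph).
  by rewrite NegzE mulrNz -pmulrn; case: (Pn h y m.+1 Ph).
suff Ps (s : seq T) h : P h -> P (h + \sum_(x <- s) iota x *~ c x).
  by rewrite -[X in P X]add0r; apply: Ps.
elim: s h => [|x s IH] h Ph; first by rewrite big_nil addr0.
by rewrite big_cons addrA; apply/IH/Pz.
Qed.

(* When for every z there is a w
   with s w z = w, phi(g) computes lambda_g on iota(T); consequently phi(G)
   is exactly the group generated by the s x, and adding a generator to g
   multiplies phi(g) by a generator. *)
Section StructureGroup.
Variables (T : finType) (G : zmodType) (circ : G -> G -> G) (iota : T -> G)
  (phi : G -> {perm T}) (s : T -> {perm T}).
Hypotheses (braceG : is_left_brace circ)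
  (lam_iota : forall x y, brace_lam circ (iota x) (iota y) = iota (s x y))
  (phi_iota : forall x, phi (iota x) = s x)
  (phiM : forall a b, phi (circ a b) = (phi b * phi a)%g)
  (iota_gen : forall g, exists c : {ffun T -> int}, g = \sum_x iota x *~ c x)
  (s_fix : forall z, exists w, s w z = w).
Local Notation lam := (brace_lam circ).

Lemma phi0 : phi 0 = 1%g.
Proof.
have := phiM 0 0; rewrite brace_0circ // => E.
by apply: (mulgI (phi 0)); rewrite mulg1 -E.
Qed.

Definition lam_compatible (g : G) : Prop := forall y, lam g (iota y) = iota (phi g y).

Lemma lam_compatible_iota x : lam_compatible (iota x).
Proof. by move=> y; rewrite lam_iota phi_iota. Qed.

Lemma lam_compatible_circ a b :
  lam_compatible a -> lam_compatible b -> lam_compatible (circ a b).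
Proof. by move=> Ca Cb y; rewrite lamM // Cb Ca phiM permM. Qed.

Lemma lam_compatible_inv a a' :
  lam_compatible a -> circ a a' = 0 -> lam_compatible a'.
Proof.
move=> Ca aa' y; apply: (@lam_inj _ _ braceG a).
by rewrite -lamM // aa' lam0 // Ca -permM -phiM aa' phi0 perm1.
Qed.

(* -iota z is the circ-inverse of iota w when s w z = w. *)
Lemma lam_compatible_opp z : lam_compatible (- iota z).
Proof.
have [w swz] := s_fix z; apply: (@lam_compatible_inv (iota w)).
  exact: lam_compatible_iota.
by rewrite circ_lam // lamN // lam_iota swz subrr.
Qed.

Lemma add_iota_circ h y : lam_compatible h ->
  h + iota y = circ h (iota ((phi h)^-1%g y)) /\
  h - iota y = circ h (- iota ((phi h)^-1%g y)).
Proof.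
move=> Ch; rewrite (circ_lam circ h (- _)) (circ_lam circ h (iota _)).
by rewrite lamN // Ch permKV.
Qed.

Lemma lam_compatible_all g : lam_compatible g.
Proof.
apply: (generated_ind iota_gen) => [y|h y Ch|h y Ch].
- by rewrite lam0 // phi0 perm1.
- by rewrite (add_iota_circ y Ch).1; apply/lam_compatible_circ/lam_compatible_iota.
- by rewrite (add_iota_circ y Ch).2; apply/lam_compatible_circ/lam_compatible_opp.
Qed.

Lemma phi_add_iota h y : phi (h + iota y) = (s ((phi h)^-1%g y) * phi h)%g.
Proof. by rewrite (add_iota_circ y (lam_compatible_all h)).1 phiM phi_iota. Qed.

Lemma phi_in_gen g : phi g \in <<[set s x | x : T]>>%g.
Proof.
have s_in x : s x \in <<[set s x | x : T]>>%g by apply/mem_gen/imset_f.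
move: g; apply: (generated_ind iota_gen) => [|h y|h y]; first by rewrite phi0 group1.
  by rewrite phi_add_iota; apply: groupM.
have -> : phi (h - iota y) = ((s ((phi (h - iota y))^-1%g y))^-1 * phi h)%g.
  by rewrite -[in phi h](subrK (iota y) h) phi_add_iota mulKg.
by move=> Ph; rewrite groupM ?groupV.
Qed.

Lemma gen_in_phi p : p \in <<[set s x | x : T]>>%g -> exists g, phi g = p.
Proof.
case/gen_prodgP=> m [c c_s ->]; elim: m c c_s => [|m IH] c c_s.
  by exists 0; rewrite big_ord0 phi0.
have [g phi_g] := IH (fun i => c (widen_ord (leqnSn m) i)) (fun i => c_s _).
have /imsetP [x _ cx] := c_s ord_max.
by exists (circ (iota x) g); rewrite big_ord_recr /= phiM phi_g phi_iota cx.
Qed.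

End StructureGroup.

(* For a = (u, i) we write c_u(m) = b(u, e_m); then
   lambda_a(e_k, l) = (e_{i+k}, l - c_u(i+k)) stays in X, and lamX J a is
   lambda_a restricted to X. *)
Definition bcoord (n : nat) (J : 'Z_n -> 'Z_n) (u : vec n) (m : 'Z_n) : 'Z_n :=
  \sum_k u k * J (m - k).

Definition lamX_fun (n : nat) (J : 'Z_n -> 'Z_n) (a : Bt n) (y : Xt n) : Xt n :=
  (a.2 + y.1, y.2 - bcoord J a.1 (a.2 + y.1)).

Lemma lamX_fun_inj (n : nat) (J : 'Z_n -> 'Z_n) (a : Bt n) : injective (lamX_fun J a).
Proof.
move=> [k l] [k' l'] E.
have Ek : k = k' by apply: (addrI a.2); exact: (congr1 fst E).
by subst k'; congr (_, _); apply: addIr (congr1 snd E).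
Qed.

Definition lamX (n : nat) (J : 'Z_n -> 'Z_n) (a : Bt n) : {perm Xt n} :=
  perm (@lamX_fun_inj n J a).

Section BraceB.
Variables (n : nat) (J : 'Z_n -> 'Z_n).
Implicit Types (u v w : vec n) (a c : Bt n).

Lemma lamXE a y : lamX J a y = (a.2 + y.1, y.2 - bcoord J a.1 (a.2 + y.1)).
Proof. by rewrite permE. Qed.

Lemma alpha0 u : alpha 0 u = u.
Proof. by apply/ffunP => k; rewrite ffunE subr0. Qed.

Lemma alpha_ev (i k : 'Z_n) : alpha i (ev k) = ev (i + k).
Proof. by apply/ffunP => m; rewrite !ffunE subr_eq [k + i]addrC. Qed.

Lemma vec_decomp u : u = \sum_k ev k *+ u k.
Proof.
apply/ffunP => m; rewrite sum_ffunE (bigD1 m) //= big1 => [|k km].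
  by rewrite addr0 ffunMnE ffunE eqxx natr_Zp.
by rewrite ffunMnE ffunE eq_sym (negPf km) mul0rn.
Qed.

Lemma bform_bcoord u w : bform J u w = \sum_l w l * bcoord J u l.
Proof.
rewrite /bform exchange_big; apply: eq_bigr => l _.
by rewrite /bcoord mulr_sumr; apply: eq_bigr => k _; rewrite mulrCA mulrA.
Qed.

Lemma bform_ev u m : bform J u (ev m) = bcoord J u m.
Proof.
rewrite bform_bcoord (bigD1 m) //= big1 => [|k km]; last by rewrite ffunE (negPf km) mul0r.
by rewrite ffunE eqxx mul1r addr0.
Qed.

Lemma bcoord_ev (i m : 'Z_n) : bcoord J (ev i) m = J (m - i).
Proof.
rewrite /bcoord (bigD1 i) //= big1 => [|k ki]; last by rewrite ffunE (negPf ki) mul0r.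
by rewrite ffunE eqxx mul1r addr0.
Qed.

Lemma bcoord_add u v m : bcoord J (vadd u v) m = bcoord J u m + bcoord J v m.
Proof. by rewrite /bcoord -big_split; apply: eq_bigr => k _; rewrite ffunE mulrDl. Qed.

Lemma bcoord_alpha (i : 'Z_n) v m : bcoord J (alpha i v) m = bcoord J v (m - i).
Proof.
rewrite /bcoord (reindex_inj (addIr i)) /=; apply: eq_bigr => k _.
by rewrite ffunE addrK opprD addrA addrAC.
Qed.

Lemma bcoord0 m : bcoord J (vzero n) m = 0.
Proof. by rewrite /bcoord big1 // => k _; rewrite ffunE mul0r. Qed.

Lemma bform_addl u v w : bform J (vadd u v) w = bform J u w + bform J v w.
Proof.
rewrite !bform_bcoord -big_split; apply: eq_bigr => l _.
by rewrite bcoord_add mulrDr.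
Qed.

Lemma bform_addr u v w : bform J u (vadd v w) = bform J u v + bform J u w.
Proof.
by rewrite !bform_bcoord -big_split; apply: eq_bigr => l _; rewrite ffunE mulrDl.
Qed.

Lemma bform_0r u : bform J u (vzero n) = 0.
Proof. by rewrite bform_bcoord big1 // => l _; rewrite ffunE mul0r. Qed.

Lemma Badd_assoc a c (d : Bt n) : Badd J (Badd J a c) d = Badd J a (Badd J c d).
Proof.
rewrite /Badd /=; congr (_, _); first by apply/ffunP => k; rewrite !ffunE addrA.
by rewrite bform_addl bform_addr; ring.
Qed.

Lemma Badd0 a : Badd J a (vzero n, 0) = a.
Proof.
case: a => u i; rewrite /Badd /= bform_0r !addr0; congr (_, _).
by apply/ffunP => k; rewrite !ffunE addr0.
Qed.

Lemma Badd_cancel a c (d : Bt n) : Badd J a d = Badd J c d -> a = c.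
Proof.
case: a c => [u i] [v j] /= E.
have Euv : u = v.
  by apply/ffunP => k; have /ffunP/(_ k) := congr1 fst E; rewrite !ffunE => /addIr.
by subst v; congr (_, _); have /= /addIr/addIr := congr1 snd E.
Qed.

Lemma Badd_lamX_emb a (x : Xt n) : Badd J a (emb (lamX J a x)) = Bcirc a (emb x).
Proof.
case: a x => u i [k l]; rewrite lamXE /Badd /Bcirc /emb /= alpha_ev bform_ev.
by congr (_, _); ring.
Qed.

Lemma lamX_emb (x : Xt n) : lamX J (emb x) = sigma J x.
Proof. by apply/permP => y; rewrite lamXE /sigma permE /sigma_fun /= bcoord_ev. Qed.

Lemma lamX_circ a c : lamX J (Bcirc a c) = (lamX J c * lamX J a)%g.
Proof.
apply/permP => y; rewrite permM !lamXE /= bcoord_add bcoord_alpha.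
have -> : a.2 + c.2 + y.1 - a.2 = c.2 + y.1 by ring.
by rewrite !addrA; congr (_, _); ring.
Qed.

Lemma lamX0 : lamX J (vzero n, 0) = 1%g.
Proof. by apply/permP => y; rewrite lamXE perm1 /= add0r bcoord0 subr0; case: y. Qed.

Lemma lamX_add_emb a (y : Xt n) :
  lamX J (Badd J a (emb y)) = (sigma J ((lamX J a)^-1%g y) * lamX J a)%g.
Proof. by rewrite -{1}(permKV (lamX J a) y) Badd_lamX_emb lamX_circ lamX_emb. Qed.

Lemma lamX_radical u : (forall v, bform J u v = 0) -> lamX J (u, 0) = 1%g.
Proof.
move=> rad_u; apply/permP => y.
by rewrite lamXE perm1 /= add0r -bform_ev rad_u subr0; case: y.
Qed.

Lemma lamX_injP : injective (lamX J) <-> nonsingular J.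
Proof.
split=> [inj_lamX u rad_u | ns [u i] [v j] E].
  by have [] := inj_lamX _ _ (etrans (lamX_radical rad_u) (esym lamX0)).
have Eij : i = j.
  have /(congr1 fst) := congr1 (fun p : {perm Xt n} => p (0, 0)) E.
  by rewrite !lamXE /= !addr0.
subst j; have Ec m : bcoord J u m = bcoord J v m.
  have /(congr1 snd) := congr1 (fun p : {perm Xt n} => p (m - i, 0)) E.
  by rewrite !lamXE /= [i + _]addrC subrK !sub0r => /oppr_inj.
suff /subr0_eq -> : u - v = vzero n by [].
apply: ns => w; rewrite bform_bcoord big1 // => l _.
suff -> : bcoord J (u - v) l = 0 by rewrite mulr0.
rewrite -(subrr (bcoord J v l)) -{1}Ec /bcoord -sumrB.
by apply: eq_bigr => k _; rewrite !ffunE mulrBl.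
Qed.

End BraceB.

(* lamX J maps B_J onto calG J: its image is a group containing the
   generators sigma_x = lamX (e_i, j), and (B, circ) is generated by the
   (e_k, 0) and the (0, i) = (e_0, 0)^-1 circ (e_0, i). *)
Section LamXImage.
Variables (n : nat) (J : 'Z_n -> 'Z_n).

Lemma sigma_in_calG (x : Xt n) : sigma J x \in calG J.
Proof. exact/mem_gen/imset_f. Qed.

Lemma lamX_vec_in_calG (u : vec n) : lamX J (u, 0) \in calG J.
Proof.
have closedD v w : lamX J (v, 0) \in calG J -> lamX J (w, 0) \in calG J ->
    lamX J (v + w, 0) \in calG J.
  have -> : (v + w, 0) = Bcirc (v, 0) (w, 0) by rewrite /Bcirc /= alpha0 addr0.
  by rewrite lamX_circ => Cv Cw; apply: groupM.
have ev_in k : lamX J (ev k, 0) \in calG J.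
  by rewrite -[(ev k, 0)]/(emb (k, 0)) lamX_emb sigma_in_calG.
have lamX00 : lamX J (0, 0) = 1%g := lamX0 J.
rewrite (vec_decomp u); apply: (big_ind (fun v => lamX J (v, 0) \in calG J)).
- by rewrite lamX00 group1.
- exact: closedD.
move=> k _; elim: (nat_of_ord (u k)) => [|m IHm]; last by rewrite mulrSr closedD.
by rewrite mulr0n lamX00 group1.
Qed.

Lemma lamX_in_calG (a : Bt n) : lamX J a \in calG J.
Proof.
case: a => u i; have -> : (u, i) = Bcirc (u, 0) (vzero n, i).
  by rewrite /Bcirc /= add0r; congr (_, _); apply/ffunP => k; rewrite !ffunE addr0.
have shift_i : lamX J (vzero n, i) = (sigma J (0, i) * (sigma J (0, 0))^-1)%g.
  rewrite -!lamX_emb; have -> : emb (0, i) = Bcirc (emb (0, 0)) (vzero n, i).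
    by rewrite /Bcirc /emb /= alpha0 add0r; congr (_, _); apply/ffunP => k; rewrite !ffunE addr0.
  by rewrite lamX_circ mulgK.
by rewrite lamX_circ shift_i !groupM ?groupV ?sigma_in_calG ?lamX_vec_in_calG.
Qed.

Lemma calG_lamX_image : calG J = [set lamX J a | a : Bt n].
Proof.
have image_group : group_set [set lamX J a | a : Bt n].
  apply/group_setP; split; first by apply/imsetP; exists (vzero n, 0); rewrite ?lamX0.
  move=> p q /imsetP [a _ ->] /imsetP [c _ ->].
  by apply/imsetP; exists (Bcirc c a); rewrite ?lamX_circ.
apply/eqP; rewrite eqEsubset; apply/andP; split.
  rewrite /calG (gen_subG _ (Group image_group)) /=.
  by apply/subsetP => p /imsetP [x _ ->]; apply/imsetP; exists (emb x); rewrite ?lamX_emb.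
by apply/subsetP => p /imsetP [a _ ->]; apply: lamX_in_calG.
Qed.

End LamXImage.

Lemma lamX_inj_card (n : nat) (J : 'Z_n -> 'Z_n) :
  (#|{: Bt n}| <= #|calG J|)%N -> injective (lamX J).
Proof.
rewrite calG_lamX_image => le_B_img a c.
have /imset_injP inj_lamX : #|[set lamX J a | a : Bt n]| == #|{: Bt n}|.
  by rewrite eqn_leq leq_imset_card.
exact: inj_lamX.
Qed.

(* For every z there is w with sigma_w(z) = w: take
   w = (z_1 + z_2 - J 0, z_2 - J 0). *)
Lemma sigma_fix (n : nat) (J : 'Z_n -> 'Z_n) (z : Xt n) : exists w, sigma J w z = w.
Proof.
exists (z.1 + z.2 - J 0, z.2 - J 0); rewrite /sigma permE /sigma_fun /=.
have -> : z.2 - J 0 + z.1 = z.1 + z.2 - J 0 by ring.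
by rewrite subrr.
Qed.

Section NaturalAddition.
Variables (n : nat) (J : 'Z_n -> 'Z_n) (G : zmodType) (circ : G -> G -> G)
  (iota : Xt n -> G) (phi : G -> {perm Xt n}).
Hypotheses (braceG : is_left_brace circ)
  (lam_iota : forall x y, brace_lam circ (iota x) (iota y) = iota (sigma J x y))
  (phi_iota : forall x, phi (iota x) = sigma J x)
  (phiM : forall a b, phi (circ a b) = (phi b * phi a)%g)
  (iota_gen : forall g, exists c : {ffun Xt n -> int}, g = \sum_x iota x *~ c x)
  (nsJ : nonsingular J).

Let lamX_inj : injective (lamX J) := proj2 (lamX_injP J) nsJ.

Lemma phi_lamX g : exists a, phi g = lamX J a.
Proof.
have := phi_in_gen braceG lam_iota phi_iota phiM iota_gen (@sigma_fix n J) g.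
by rewrite -/(calG J) calG_lamX_image => /imsetP [a _ ->]; exists a.
Qed.

Lemma phi_add_iota_lamX h c y :
  phi h = lamX J c -> phi (h + iota y) = lamX J (Badd J c (emb y)).
Proof.
move=> phi_h.
rewrite (phi_add_iota braceG lam_iota phi_iota phiM iota_gen (@sigma_fix n J)).
by rewrite lamX_add_emb phi_h.
Qed.

Lemma phi_addB h c : phi h = lamX J c ->
  forall g a, phi g = lamX J a -> phi (g + h) = lamX J (Badd J a c).
Proof.
move: h c; apply: (generated_ind iota_gen) => [c|h y IH c|h y IH c] phi_h g a phi_g.
- have -> : c = (vzero n, 0).
    by apply: lamX_inj; rewrite -phi_h lamX0 (phi0 braceG phiM).
  by rewrite addr0 Badd0.
- have [c' phi_h'] := phi_lamX h.
  have -> : c = Badd J c' (emb y) by apply: lamX_inj; rewrite -phi_h (phi_add_iota_lamX y phi_h').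
  by rewrite addrA -Badd_assoc; apply/phi_add_iota_lamX/IH.
- have [d phi_d] := phi_lamX (g + (h - iota y)).
  have phi_h' : phi h = lamX J (Badd J c (emb y)).
    by rewrite -(phi_add_iota_lamX y phi_h) subrK.
  rewrite phi_d; congr (lamX J _); apply: (@Badd_cancel _ J _ _ (emb y)).
  apply: lamX_inj; rewrite Badd_assoc -(IH _ phi_h' g a phi_g).
  by rewrite -(phi_add_iota_lamX y phi_d) addrA subrK.
Qed.

End NaturalAddition.

Theorem mainTheorem14 (n : nat) (J : 'Z_n -> 'Z_n) :
  (1 < n)%N ->
  (forall i : 'Z_n, J i = J (- i)%R) ->
  forall add : {perm Xt n} -> {perm Xt n} -> {perm Xt n},
    natural_add J add ->
    (brace_iso_B_calG J add <-> nonsingular J).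
Proof.
move=> _ _ add [G [circ [iota [phi [braceG [[c_of _ c_ofK] [lam_iota [phi_iota [phiM phiD]]]]]]]]].
have iota_gen g : exists c : {ffun Xt n -> int}, g = \sum_x iota x *~ c x.
  by exists (c_of g); rewrite c_ofK.
split=> [[f [f_in f_inj _ _ _]] | nsJ].
  (* An isomorphism embeds B_J into calG J, so lamX J is injective. *)
  apply/lamX_injP/lamX_inj_card; rewrite -(card_imset predT f_inj).
  by apply/subset_leq_card/subsetP => _ /imsetP [a _ ->]; apply: f_in.
(* Conversely lamX J itself is the isomorphism. *)
have phi_onto a : exists g, phi g = lamX J a.
  exact: (gen_in_phi braceG phi_iota phiM (lamX_in_calG J a)).
exists (lamX J); split.
- exact: lamX_in_calG.
- exact/lamX_injP.
- by move=> p; rewrite calG_lamX_image => /imsetP [a _ ->]; exists a.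
- move=> a c; have [g phi_g] := phi_onto a; have [h phi_h] := phi_onto c.
  by rewrite -(phi_addB braceG lam_iota phi_iota phiM iota_gen nsJ phi_h phi_g) phiD phi_g phi_h.
- exact: lamX_circ.
Qed.
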